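(* Let $G=S_\infty$ and $m<\omega$. (a) If $M\subseteq S(G)$ is a minimal subflow, then $\phi(\mathcal{F}^M_m)$ is a thick ultrafilter on $[\omega]^m$. (b) Conversely, if $p$ is a thick ultrafilter on $[\omega]^m$, then $\{\phi^{-1}(T):T\in p\}$ generates a maximal thick filter on $H_m$, and hence there is a minimal subflow $M\subseteq S(G)$ with $p=\phi(\mathcal{F}^M_m)$.
   Context: View $S_\infty$ as the automorphism group of $\omega$ in the empty language with $\mathbf{A}_n=n=\{0,\dots,n-1\}$; $H_n$ is the set of injections $n\to\omega$, written as tuples $(s_0,\dots,s_{n-1})$, and $\mathrm{Emb}(\mathbf{A}_m,\mathbf{A}_n)$ the set of injections $m\to n$. $S(G)$ is the inverse limit of the spaces $\beta H_n$ of ultrafilters along the continuous extensions of restriction maps $H_n\to H_m$; $\alpha(n)$ denotes the $n$-th coordinate. Right $G$-action: for $S\subseteq H_m$, $S\in(\alpha g)(m)$ iff $\{x\in H_n:x\circ g|_m\in S\}\in\alpha(n)$, for $n$ with $g(\{0,..,m-1\})\subseteq n$. A minimal subflow is a nonempty closed $G$-invariant subset containing no proper such subset. For closed $Y$, $\mathcal{F}^Y_m=\{T\subseteq H_m:T\in\alpha(m)\ \forall\alpha\in Y\}$. $T\subseteq H_m$ is thick if for every $n\geq m$ there is $s\in H_n$ with $s\circ\mathrm{Emb}(\mathbf{A}_m,\mathbf{A}_n)\subseteq T$; $T\subseteq[\omega]^m$ is thick if for every $n\geq m$ there is $s\in[\omega]^n$ with $[s]^m\subseteq T$. A thick filter (ultrafilter)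 is one all of whose members are thick; a maximal thick filter is one maximal among thick filters. $\phi:H_m\to[\omega]^m$ is $\phi(y_0,\dots,y_{m-1})=\{y_0,\dots,y_{m-1}\}$, and for a filter $\mathcal{F}$ on $H_m$, $\phi(\mathcal{F})=\{T\subseteq[\omega]^m:\phi^{-1}(T)\in\mathcal{F}\}$. *)

From mathcomp Require Import all_boot.
From mathcomp Require Import finmap.

Set Implicit Arguments.
Unset Strict Implicit.
Unset Printing Implicit Defensive.

Local Open Scope fset_scope.

Definition pset (T : Type) := T -> Prop.

(* H_n : injections n -> omega, written as duplicate-free tuples (s_0,...,s_{n-1}). *)
Definition H (n : nat) := {s : seq nat | (size s == n) && uniq s}.

Definition inH (m : nat) (S : pset (H m)) (s : seq nat) : Prop :=
  exists y : H m, S y /\ val y = s.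

Definition is_filter (T : Type) (F : pset (pset T)) : Prop :=
  [/\ F (fun _ => True),
      (forall A B : pset T, F A -> (forall x, A x -> B x) -> F B) &
      (forall A B : pset T, F A -> F B -> F (fun x => A x /\ B x))].

Definition is_ultrafilter (T : Type) (U : pset (pset T)) : Prop :=
  [/\ is_filter U, ~ U (fun _ => False) &
      (forall A : pset T, U A \/ U (fun x => ~ A x))].

Definition gen_filter (T : Type) (B : pset (pset T)) : pset (pset T) :=
  fun S => forall F : pset (pset T), is_filter F ->
             (forall b, B b -> F b) -> F S.

(* Points of S(G): compatible families alpha(n) of ultrafilters on H_n,
   compatibility along the (extensions of the) restriction maps H_n -> H_m. *)
Definition SGfam := forall n : nat, pset (pset (H n)).

Definition isSG (alpha : SGfam) : Prop :=
  (forall n, is_ultrafilter (alpha n)) /\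
  (forall m n, m <= n -> forall S : pset (H m),
      alpha m S <-> alpha n (fun x : H n => inH S (take m (val x)))).

Definition Sinfty (g : nat -> nat) : Prop := bijective g.

Definition bnd (g : nat -> nat) (m : nat) : nat := \max_(i < m) (g i).+1.

(* Right action: S ∈ (alpha g)(m) iff {x ∈ H_n : x ∘ g|_m ∈ S} ∈ alpha(n). *)
Definition act (alpha : SGfam) (g : nat -> nat) : SGfam :=
  fun m S => alpha (bnd g m)
    (fun x : H (bnd g m) => inH S [seq nth 0 (val x) (g i) | i <- iota 0 m]).

(* Closed subsets of S(G) (inverse-limit topology; the sets
   {beta : S ∈ beta(n)} form a base). *)
Definition closedSG (Y : pset SGfam) : Prop :=
  forall alpha, isSG alpha ->
    (forall n (S : pset (H n)), alpha n S -> exists beta, Y beta /\ beta n S) ->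
    Y alpha.

Definition subflow (Y : pset SGfam) : Prop :=
  [/\ (forall alpha, Y alpha -> isSG alpha),
      (exists alpha, Y alpha),
      closedSG Y &
      (forall g, Sinfty g -> forall alpha, Y alpha -> Y (act alpha g))].

Definition minimal_subflow (M : pset SGfam) : Prop :=
  subflow M /\
  (forall N : pset SGfam, subflow N -> (forall a, N a -> M a) ->
     forall a, M a -> N a).

Definition FY (Y : pset SGfam) (m : nat) : pset (pset (H m)) :=
  fun T => forall alpha, Y alpha -> alpha m T.
Arguments FY : clear implicits.

Definition thickH (m : nat) (T : pset (H m)) : Prop :=
  forall n, m <= n -> exists s : H n,
    forall e : 'I_m -> 'I_n, injective e ->
      inH T [seq nth 0 (val s) (e i) | i <- enum 'I_m].

Definition OmSub (m : nat) := {A : {fset nat} | #|` A| == m}.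

Definition thickS (m : nat) (T : pset (OmSub m)) : Prop :=
  forall n, m <= n -> exists s : OmSub n,
    forall A : OmSub m, val A `<=` val s -> T A.

Definition thick_filterH (m : nat) (F : pset (pset (H m))) : Prop :=
  is_filter F /\ (forall T, F T -> thickH T).

Definition maximal_thick_filterH (m : nat) (F : pset (pset (H m))) : Prop :=
  thick_filterH F /\
  (forall F', thick_filterH F' -> (forall T, F T -> F' T) -> forall T, F' T -> F T).

Definition thick_ultrafilterS (m : nat) (p : pset (pset (OmSub m))) : Prop :=
  is_ultrafilter p /\ (forall T, p T -> thickS T).

Definition phi_set (m : nat) (x : H m) : {fset nat} := [fset y | y in val x].

Definition phi_pre (m : nat) (T : pset (OmSub m)) : pset (H m) :=
  fun x => exists A : OmSub m, T A /\ val A = phi_set x.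

Definition phi_img (m : nat) (F : pset (pset (H m))) : pset (pset (OmSub m)) :=
  fun T => F (phi_pre T).

(** Everything rests on ultrafilter limits: for an ultrafilter [W] on an index
    set and points [b i] of [S(G)], [fun k S => W (fun i => b i k S)] is again a
    point of [S(G)], and it lies in every closed set containing [W]-almost all of
    the [b i].  With Zorn's lemma this yields minimal subflows inside every subflow.

    (a) In a minimal subflow [M], the points whose whole orbit puts [phi^-1(T)]
    into the [m]-th coordinate form a closed invariant set, which is all of [M]
    as soon as it is nonempty.  It is nonempty when, for every [n], some point of
    [M] carries the [n]-tuples all of whose [m]-subtuples lie in [phi^-1(T)]
    (take a limit along [n]).  Ramsey's theorem, applied to a point of [M]
    translated by a suitable permutation, provides this at each level for [T] or
    for its complement, so [phi(F^M_m)] is an ultrafilter; its members are thick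
    because every embedding [m -> n] extends to a permutation.

    (b) For [T] in [p] and every [n], an injection onto a large [T]-homogeneous
    set gives a principal point all of whose translates below level [n] see
    [phi^-1(T)].  A limit of these, as [T] shrinks in [p] and [n] grows, is a
    point whose whole orbit sees every [phi^-1(T)] with [T] in [p]; a minimal
    subflow inside the closure of such points has [phi(F^M_m)] containing [p],
    hence equal to it.  For maximality of the generated thick filter, given [S]
    in a thick filter extending it, the [m]-sets all of whose enumerations lie
    in [S] form a member of [p]: otherwise [S] would meet [phi^-1] of their
    complement in a thick set, which contains an [m]-tuple together with all of
    its reorderings. *)

From mathcomp Require Import all_boot.
From mathcomp Require Import finmap.
From mathcomp Require classical_sets filter boolp.
From Stdlib Require Import Classical.

Set Implicit Arguments.
Unset Strict Implicit.
Unset Printing Implicit Defensive.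

Section Ultrafilter.
Variables (T : Type) (U : pset (pset T)).
Hypothesis UU : is_ultrafilter U.

Lemma ultra_setT : U (fun _ => True). Proof. by case: UU => [[]]. Qed.

Lemma ultraS A B : U A -> (forall x, A x -> B x) -> U B.
Proof. by case: UU => [[_ h _]] _ _; apply: h. Qed.

Lemma ultraI A B : U A -> U B -> U (fun x => A x /\ B x).
Proof. by case: UU => [[_ _ h]] _ _; apply: h. Qed.

Lemma ultra_not_set0 : ~ U (fun _ => False). Proof. by case: UU. Qed.

Lemma ultra_setVsetC A : U A \/ U (fun x => ~ A x). Proof. by case: UU. Qed.

Lemma ultra_inhabited A : U A -> exists x, A x.
Proof.
move=> UA; apply: NNPP => nA; apply: ultra_not_set0; apply: ultraS UA _ => x Ax.
by apply: nA; exists x.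
Qed.

Lemma ultra_all A : (forall x, A x) -> U A.
Proof. by move=> h; apply: ultraS ultra_setT _. Qed.

Lemma ultra_or A B : U (fun x => A x \/ B x) -> U A \/ U B.
Proof.
move=> UAB; case: (ultra_setVsetC A) => [|nA]; first by left.
by right; apply: ultraS (ultraI UAB nA) _ => x [[Ax|Bx] nAx].
Qed.

Lemma ultra_notC A : U A -> ~ U (fun x => ~ A x).
Proof. by move=> UA UnA; apply: ultra_not_set0; apply: ultraS (ultraI UA UnA) _ => x []. Qed.

Lemma ultra_big_and (I : eqType) (l : seq I) (A : I -> pset T) :
  (forall i, i \in l -> U (A i)) -> U (fun x => forall i, i \in l -> A i x).
Proof.
elim: l => [|j l IH] h; first by apply: ultra_all => x i; rewrite in_nil.
have UAj : U (A j) by apply: h; rewrite inE eqxx.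
have UAl := IH (fun i il => h i (@mem_behead _ (j :: l) i il)).
apply: ultraS (ultraI UAj UAl) _ => x [Ajx Alx] i.
by rewrite inE => /orP[/eqP->//|]; apply: Alx.
Qed.

Lemma ultra_big_or (I : eqType) (l : seq I) (A : I -> pset T) :
  U (fun x => exists i, i \in l /\ A i x) -> exists i, i \in l /\ U (A i).
Proof.
elim: l => [|j l IH] h.
  by case: ultra_not_set0; apply: ultraS h _ => x [i []]; rewrite in_nil.
have : U (fun x => A j x \/ exists i, i \in l /\ A i x).
  apply: ultraS h _ => x [i []]; rewrite inE => /orP[/eqP->|il] Ai; first by left.
  by right; exists i.
case/ultra_or => [Aj|/IH [i [il Ai]]]; first by exists j; rewrite inE eqxx.
by exists i; rewrite inE il orbT.
Qed.

Lemma ultra_max (V : pset (pset T)) : is_filter V -> ~ V (fun _ => False) ->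
  (forall A, U A -> V A) -> forall A, V A -> U A.
Proof.
move=> [_ VS VI] V0 UV A VA; case: (ultra_setVsetC A) => // UnA.
by case: V0; apply: VS (VI _ _ VA (UV _ UnA)) _ => x [].
Qed.

End Ultrafilter.

Lemma proper_filter_ultra (T : Type) (F : pset (pset T)) :
  is_filter F -> ~ F (fun _ => False) ->
  exists U, is_ultrafilter U /\ (forall A, F A -> U A).
Proof.
move=> [FT FS FI] F0.
have PF : filter.ProperFilter F.
  constructor; first exact: F0.
  constructor; [exact: FT | by move=> A B; apply: FI | by move=> A B AB /FS; apply].
have [G [UG FG]] := filter.ultraFilterLemma PF.
exists G; split => //; split; [split| |].
- exact: filter.filterT.
- by move=> A B GA AB; apply: filter.filterS AB GA.
- by move=> A B; apply: filter.filterI.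
- exact: filter.filter_not_empty.
- by move=> A; apply: filter.in_ultra_setVsetC.
Qed.

Lemma directed_base_ultra (T : Type) (B : pset (pset T)) :
  (exists b, B b) ->
  (forall b1 b2, B b1 -> B b2 -> exists2 b, B b & forall x, b x -> b1 x /\ b2 x) ->
  (forall b, B b -> exists x, b x) ->
  exists U, is_ultrafilter U /\ (forall b, B b -> U b).
Proof.
move=> [b0 Bb0] Bdir Bne.
pose F (S : pset T) := exists2 b, B b & forall x, b x -> S x.
have [|[b Bb /(_ _)]|U [UU FU]] := @proper_filter_ultra _ F.
- split; first by exists b0.
  + by move=> S S' [b Bb bS] SS'; exists b => // x /bS /SS'.
  + move=> S S' [b Bb bS] [b' Bb' bS']; have [c Bc cbb'] := Bdir _ _ Bb Bb'.
    by exists c => // x /cbb' [/bS ? /bS' ?].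
- by have [x bx] := Bne _ Bb => /(_ x bx).
- by exists U; split=> // b Bb; apply: FU; exists b.
Qed.

Definition ultra_lim (I : Type) (W : pset (pset I)) (b : I -> SGfam) : SGfam :=
  fun k S => W (fun i => b i k S).

Lemma isSG_ultra_lim (I : Type) (W : pset (pset I)) (b : I -> SGfam) :
  is_ultrafilter W -> (forall i, isSG (b i)) -> isSG (ultra_lim W b).
Proof.
move=> UW bS; have bU i n : is_ultrafilter (b i n) by case: (bS i).
rewrite /ultra_lim; split=> [n|m n mn S]; last first.
  by split=> /= WS; apply: (ultraS UW WS) => i; case: (bS i) => _ /(_ m n mn S) [].
split; [split| |].
- by apply: ultra_all => // i; apply: ultra_setT.
- by move=> A B WA AB; apply: (ultraS UW WA) => i bA; apply: (ultraS (bU i n) bA AB).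
- move=> A B WA WB; apply: (ultraS UW (ultraI UW WA WB)) => i [bA bB].
  exact: (ultraI (bU i n) bA bB).
- by move=> W0; apply: (ultra_not_set0 UW); apply: (ultraS UW W0) => i; apply: ultra_not_set0.
- move=> A; case: (ultra_setVsetC UW (fun i => b i n A)) => WA; [by left | right].
  by apply: (ultraS UW WA) => i nA; case: (ultra_setVsetC (bU i n) A).
Qed.

Lemma closedSG_ultra_lim (Z : pset SGfam) (I : Type) (W : pset (pset I))
    (b : I -> SGfam) :
  closedSG Z -> is_ultrafilter W -> (forall i, isSG (b i)) ->
  W (fun i => Z (b i)) -> Z (ultra_lim W b).
Proof.
move=> cZ UW bS WZ; apply: cZ; first exact: isSG_ultra_lim.
move=> n S WS; have [i [Zbi bS']] := ultra_inhabited UW (ultraI UW WZ WS).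
by exists (b i).
Qed.

Definition validH (n : nat) (s : seq nat) := (size s == n) && uniq s.

Definition mkH n (s : seq nat) (v : validH n s) : H n :=
  @exist _ (fun s => (size s == n) && uniq s) s v.

Lemma validHP n (y : H n) : validH n (val y). Proof. exact: valP y. Qed.

Lemma sizeH n (y : H n) : size (val y) = n.
Proof. by case/andP: (valP y) => /eqP. Qed.

Lemma uniqH n (y : H n) : uniq (val y).
Proof. by case/andP: (valP y). Qed.

Lemma inH_valid n (Q : seq nat -> Prop) (s : seq nat) : validH n s ->
  inH (fun y : H n => Q (val y)) s <-> Q s.
Proof. by move=> vs; split=> [[y [Qy <-]] | Qs] //; exists (mkH vs). Qed.

Lemma inHE n (S : pset (H n)) (y : H n) : inH S (val y) <-> S y.
Proof. by split=> [[z [Sz /val_inj <-]] | Sy] //; exists y. Qed.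

Lemma inHS m (S S' : pset (H m)) s : (forall y, S y -> S' y) -> inH S s -> inH S' s.
Proof. by move=> SS' [y [Sy ey]]; exists y; split => //; apply: SS'. Qed.

Lemma validH_take b n (s : seq nat) : b <= n -> validH n s -> validH b (take b s).
Proof.
move=> bn /andP[/eqP sz us]; rewrite /validH size_take sz take_uniq // andbT.
by case: ltngtP bn => // ->.
Qed.

Lemma ultra_image_inH (A : Type) (U : pset (pset A)) k (f : A -> seq nat) :
  is_ultrafilter U -> (forall x, validH k (f x)) ->
  is_ultrafilter (fun S : pset (H k) => U (fun x => inH S (f x))).
Proof.
move=> UU vf; have fE (S : pset (H k)) x : inH S (f x) <-> S (mkH (vf x)).
  split=> [[y [Sy ey]] | Sx]; last by exists (mkH (vf x)).
  by have -> : mkH (vf x) = y by apply: val_inj.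
split; [split| |].
- by apply: ultra_all => // x; apply/fE.
- by move=> S S' US SS'; apply: (ultraS UU US) => x /fE /SS' /fE.
- move=> S S' US US'; apply: (ultraS UU (ultraI UU US US')).
  by move=> x [/fE ? /fE ?]; apply/fE.
- by move=> U0; apply: (ultra_not_set0 UU); apply: (ultraS UU U0) => x /fE.
- move=> S; case: (ultra_setVsetC UU (fun x => S (mkH (vf x)))) => h; [left | right].
    by apply: (ultraS UU h) => x Sx; apply/fE.
  by apply: (ultraS UU h) => x nSx; apply/fE.
Qed.

Definition precomp (g : nat -> nat) (x : seq nat) (k : nat) :=
  [seq nth 0 x (g i) | i <- iota 0 k].

Definition subtuple m n (x : seq nat) (e : 'I_m -> 'I_n) :=
  [seq nth 0 x (e i) | i <- enum 'I_m].

Lemma bnd_lt g k i : i < k -> g i < bnd g k.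
Proof. by move=> ik; apply: (@leq_bigmax _ (fun j : 'I_k => (g j).+1) (Ordinal ik)). Qed.

Lemma bnd_le g k N : (forall i, i < k -> g i < N) -> bnd g k <= N.
Proof. by move=> h; apply/bigmax_leqP => i _; apply: h. Qed.

Lemma leq_bnd g m n : m <= n -> bnd g m <= bnd g n.
Proof. by move=> mn; apply: bnd_le => i im; apply: bnd_lt (leq_trans im mn). Qed.

Lemma precomp_take g k b (s : seq nat) : (forall i, i < k -> g i < b) ->
  precomp g (take b s) k = precomp g s k.
Proof.
move=> h; apply/eq_in_map => i; rewrite mem_iota add0n => /andP[_ /h gib].
by rewrite nth_take.
Qed.

Lemma validH_precomp g k N (x : seq nat) : injective g -> validH N x ->
  (forall i, i < k -> g i < N) -> validH k (precomp g x k).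
Proof.
move=> ig /andP[/eqP sx ux] gN; rewrite /validH size_map size_iota eqxx /=.
rewrite map_inj_in_uniq ?iota_uniq // => i j; rewrite !mem_iota !add0n.
move=> /andP[_ /gN iN] /andP[_ /gN jN] /eqP; rewrite nth_uniq ?sx // => /eqP.
exact: ig.
Qed.

Lemma precomp_comp g h k N (x : seq nat) : (forall i, i < k -> g i < N) ->
  precomp g (precomp h x N) k = precomp (h \o g) x k.
Proof.
move=> gN; apply/eq_in_map => i; rewrite mem_iota add0n => /andP[_ /gN giN].
by rewrite (nth_map 0) ?size_iota // nth_iota.
Qed.

Lemma precomp_id n (x : seq nat) : size x = n -> precomp id x n = x.
Proof. by move=> <-; rewrite /precomp -{3}(mkseq_nth 0 x). Qed.

Lemma actE (a : SGfam) g k N (S : pset (H k)) : isSG a -> bnd g k <= N ->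
  act a g S <-> a N (fun x : H N => inH S (precomp g (val x) k)).
Proof.
move=> [aU aC] bN; rewrite /act (aC _ _ bN).
have e (x : H N) : inH (fun y : H (bnd g k) => inH S (precomp g (val y) k))
    (take (bnd g k) (val x)) <-> inH S (precomp g (val x) k).
  rewrite (inH_valid (fun s => inH S (precomp g s k))); last first.
    exact: validH_take bN (validHP x).
  by rewrite precomp_take //; apply: bnd_lt.
by split=> h; apply: (ultraS (aU N) h) => x /e.
Qed.

Lemma isSG_act (a : SGfam) g : isSG a -> injective g -> isSG (act a g).
Proof.
move=> aS ig; have [aU _] := aS; split=> [k | m n mn S].
  apply: ultra_image_inH (aU _) _ => x.
  by apply: validH_precomp ig (validHP x) _ => i; apply: bnd_lt.
rewrite (actE _ aS (leq_bnd g mn)) (actE _ aS (leqnn _)).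
have e (x : H (bnd g n)) : inH S (precomp g (val x) m) <->
    inH (fun y : H n => inH S (take m (val y))) (precomp g (val x) n).
  rewrite (inH_valid (fun s => inH S (take m s))); last first.
    by apply: validH_precomp ig (validHP x) _ => i; apply: bnd_lt.
  by rewrite /precomp -map_take take_iota (minn_idPl mn).
by split=> h; apply: (ultraS (aU _) h) => x /e.
Qed.

Lemma act_comp (a : SGfam) g h k (S : pset (H k)) : isSG a ->
  injective g -> injective h -> act (act a h) g S <-> act a (h \o g) S.
Proof.
move=> aS ig ih; have [aU _] := aS.
set N1 := bnd g k; set N2 := maxn (bnd h N1) (bnd (h \o g) k).
rewrite (actE _ (isSG_act aS ih) (leqnn N1)) (actE _ aS (leq_maxl _ _ : bnd h N1 <= N2)).
rewrite (actE _ aS (leq_maxr _ _ : bnd (h \o g) k <= N2)).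
have e (x : H N2) : inH (fun y : H N1 => inH S (precomp g (val y) k))
    (precomp h (val x) N1) <-> inH S (precomp (h \o g) (val x) k).
  rewrite (inH_valid (fun s => inH S (precomp g s k))); last first.
    apply: validH_precomp ih (validHP x) _ => i iN.
    exact: leq_trans (bnd_lt h iN) (leq_maxl _ _).
  by rewrite precomp_comp //; apply: bnd_lt.
by split=> hh; apply: (ultraS (aU _) hh) => x /e.
Qed.

Lemma act_id (a : SGfam) k (S : pset (H k)) : isSG a -> act a id S <-> a k S.
Proof.
move=> aS; have [aU _] := aS; rewrite (actE _ aS (bnd_le (fun i (ik : i < k) => ik))).
have e (x : H k) : inH S (precomp id (val x) k) <-> S x by rewrite precomp_id ?sizeH ?inHE.
by split=> hh; apply: (ultraS (aU _) hh) => x /e.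
Qed.

Lemma bijective_extension (s : seq nat) : uniq s ->
  exists g, bijective g /\ (forall i, i < size s -> g i = nth 0 s i).
Proof.
move=> us; set n := (\max_(v <- s) v).+1.
have sn v : v \in s -> v < n by move=> vs; rewrite ltnS (@leq_bigmax_seq _ s predT id v vs).
set t := s ++ [seq j <- iota 0 n | j \notin s].
have ut : uniq t.
  rewrite cat_uniq us filter_uniq ?iota_uniq // andbT.
  by apply/hasPn => j; rewrite mem_filter => /andP[].
have memt j : (j \in t) = (j < n).
  rewrite mem_cat mem_filter mem_iota add0n.
  by case js: (j \in s) => //=; rewrite sn.
have st : size t = n.
  rewrite -(size_iota 0 n); apply/perm_size/uniq_perm; rewrite ?iota_uniq //.
  by move=> j; rewrite memt mem_iota add0n.
pose g j := if j < n then nth 0 t j else j.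
pose gi j := if j < n then index j t else j.
exists g; split.
  exists gi => j; rewrite /g /gi; case: (ltnP j n) => jn.
  - by rewrite -memt mem_nth ?st // index_uniq ?st.
  - by rewrite ltnNge jn.
  - by rewrite -st index_mem memt jn nth_index ?memt.
  - by rewrite ltnNge jn.
have sizesn : size s <= n by rewrite -st size_cat leq_addr.
by move=> i iS; rewrite /g (leq_trans iS sizesn) nth_cat iS.
Qed.

Lemma ord_injection_extension m n (e : 'I_m -> 'I_n) : injective e ->
  exists g : nat -> nat, bijective g /\ (forall i : 'I_m, g i = e i).
Proof.
move=> ie; set s := [seq nat_of_ord (e i) | i <- enum 'I_m].
have us : uniq s by rewrite map_inj_uniq ?enum_uniq // => i j /ord_inj /ie.
have [g [bg gs]] := bijective_extension us.
have sz : size s = m by rewrite size_map size_enum_ord.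
exists g; split=> // i; rewrite gs ?sz //.
by rewrite (nth_map i) ?size_enum_ord // nth_ord_enum.
Qed.

Lemma precomp_ord m n (e : 'I_m -> 'I_n) (g : nat -> nat) (x : seq nat) :
  (forall i : 'I_m, g i = e i :> nat) -> precomp g x m = subtuple x e.
Proof.
by move=> ge; rewrite /precomp -val_enum_ord -map_comp; apply: eq_map => i /=; rewrite ge.
Qed.

Definition invariant_part (Z : pset SGfam) k (Phi : pset (pset (H k))) : pset SGfam :=
  fun a => Z a /\ forall g, Sinfty g -> forall S, Phi S -> act a g S.

Lemma invariant_partP (Z : pset SGfam) k Phi a S :
  isSG a -> invariant_part Z Phi a -> Phi S -> a k S.
Proof. by move=> aS [_ aPhi] PhiS; rewrite -act_id //; apply: aPhi => //; exists id. Qed.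

Lemma subflow_invariant_part (Z : pset SGfam) k (Phi : pset (pset (H k))) :
  subflow Z -> (exists a, invariant_part Z Phi a) -> subflow (invariant_part Z Phi).
Proof.
move=> [ZS _ cZ actZ] ne; split=> //.
- by move=> a [/ZS].
- move=> a aS near; split.
    by apply: cZ => // n S aS'; have [b [[Zb _] bS]] := near n S aS'; exists b.
  move=> g bg S PhiS; apply: NNPP => naS; have [aU _] := aS.
  have [/naS // | h] := ultra_setVsetC (aU (bnd g k)) (fun x => inH S (precomp g (val x) k)).
  have [b [[Zb bPhi] bnS]] := near _ _ h; have [bU _] := ZS b Zb.
  exact: (ultra_notC (bU (bnd g k)) (bPhi g bg S PhiS : b _ _) bnS).
- move=> h bh a [Za aPhi]; split; first exact: actZ.
  move=> g bg S PhiS; rewrite act_comp; [|exact: ZS|exact: bij_inj|exact: bij_inj].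
  by apply: aPhi => //; apply: bij_comp.
Qed.

Lemma minimal_subflow_invariant (M : pset SGfam) k (Phi : pset (pset (H k))) :
  minimal_subflow M -> (exists a, invariant_part M Phi a) ->
  forall a S, M a -> Phi S -> a k S.
Proof.
move=> [sM minM] ne a S Ma PhiS.
have [MS _ _ _] := sM.
have sub := minM _ (subflow_invariant_part sM ne)
  (fun c (ic : invariant_part M Phi c) => proj1 ic).
exact: (invariant_partP (MS _ Ma) (sub _ Ma) PhiS).
Qed.

Lemma subflow_chain_meet (A : pset (pset SGfam)) : (exists Z, A Z) ->
  (forall Z, A Z -> subflow Z) ->
  (forall Z Z', A Z -> A Z' -> (forall a, Z a -> Z' a) \/ (forall a, Z' a -> Z a)) ->
  subflow (fun a => forall Z, A Z -> Z a).
Proof.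
move=> [Z0 AZ0] sA Atot.
have SGA Z a : A Z -> Z a -> isSG a by move=> /sA [ZS _ _ _] /ZS.
have [b0 Z0b0] : exists b0, Z0 b0 by case: (sA _ AZ0).
have [b bP] : {b : pset SGfam -> SGfam & forall Z, isSG (b Z) /\ (A Z -> Z (b Z))}.
  apply: (@boolp.choice _ _ (fun Z b => isSG b /\ (A Z -> Z b))) => Z.
  case: (classic (A Z)) => [AZ | nAZ]; last by exists b0; split=> //; apply: SGA Z0b0.
  by have [_ [a Za] _ _] := sA _ AZ; exists a; split=> //; apply: SGA Za.
pose below Z Z' := A Z' /\ forall a, Z' a -> Z a.
have [W [UW Wbelow]] : exists W, is_ultrafilter W /\ (forall Z, A Z -> W (below Z)).
  have [||| W [UW WB]] := @directed_base_ultra _ (fun S => exists2 Z, A Z & S = below Z).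
  - by exists (below Z0), Z0.
  - move=> _ _ [Z1 AZ1 ->] [Z2 AZ2 ->].
    have [Z12 | Z21] := Atot _ _ AZ1 AZ2.
    + exists (below Z1); first by exists Z1.
      by move=> Z [AZ ZZ1]; split; split=> // a /ZZ1 //; apply: Z12.
    + exists (below Z2); first by exists Z2.
      by move=> Z [AZ ZZ2]; split; split=> // a /ZZ2 //; apply: Z21.
  - by move=> _ [Z AZ ->]; exists Z; split.
  - by exists W; split=> // Z AZ; apply: WB; exists Z.
split.
- by move=> a /(_ Z0 AZ0); apply: SGA.
- exists (ultra_lim W b) => Z AZ; have [_ _ cZ _] := sA _ AZ.
  apply: (closedSG_ultra_lim cZ UW (fun i => proj1 (bP i))).
  by apply: (ultraS UW (Wbelow _ AZ)) => Z' [AZ' Z'Z]; apply/Z'Z/(proj2 (bP Z')).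
- move=> a aS near Z AZ; have [_ _ cZ _] := sA _ AZ.
  by apply: cZ => // n S /near [c [Ac cS]]; exists c; split=> //; apply: Ac.
- by move=> g bg a Aa Z AZ; have [_ _ _ actZ] := sA _ AZ; apply: actZ => //; apply: Aa.
Qed.

Lemma subflow_has_minimal (Y : pset SGfam) : subflow Y ->
  exists M, minimal_subflow M /\ (forall a, M a -> Y a).
Proof.
move=> sY.
pose T := {Z : pset SGfam | subflow Z /\ (forall a, Z a -> Y a)}.
pose R (Z Z' : T) := boolp.asbool (forall a, sval Z' a -> sval Z a).
pose tY : T := exist _ Y (conj sY (fun a Ya => Ya)).
have [||A Atot|t tmax] := @classical_sets.ZL_preorder T tY R.
- by move=> t; apply/boolp.asboolP.
- by move=> r s t /boolp.asboolP rs /boolp.asboolP st; apply/boolp.asboolP => a /st /rs.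
- case: (classic (exists t, A t)) => [[t0 At0] | nA]; last first.
    by exists tY => t At; case: nA; exists t.
  pose C Z := exists2 t, A t & sval t = Z.
  have sC : subflow (fun a => forall Z, C Z -> Z a).
    apply: subflow_chain_meet.
    + by exists (sval t0), t0.
    + by move=> _ [t _ <-]; case: (svalP t).
    + move=> _ _ [t1 At1 <-] [t2 At2 <-].
      by case: (Atot _ _ At1 At2) => /boolp.asboolP; [right | left].
  have CY a : (forall Z, C Z -> Z a) -> Y a.
    by move/(_ (sval t0) (ex_intro2 _ _ t0 At0 erefl)); case: (svalP t0) => _; apply.
  exists (exist _ (fun a => forall Z, C Z -> Z a) (conj sC CY) : T) => t At.
  by apply/boolp.asboolP => a /= Ca; apply: Ca; exists t.
- exists (sval t); split; last by case: (svalP t).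
  split=> [|N sN Nt]; first by case: (svalP t).
  have NY a : N a -> Y a by move=> /Nt; case: (svalP t) => _; apply.
  have tN : R t (exist _ N (conj sN NY)) by apply/boolp.asboolP.
  by move: (tmax _ tN) => /boolp.asboolP.
Qed.

(** * Finite Ramsey theorem *)

Local Open Scope fset_scope.

Definition monochromatic (P : {fset nat} -> Prop) m (B : {fset nat}) :=
  forall A, A `<=` B -> #|` A| = m -> P A.

Definition ramsey_bound m n N := forall X : {fset nat}, N <= #|` X| ->
  forall c, exists B, [/\ B `<=` X, n <= #|` B| &
    monochromatic c m B \/ monochromatic (fun A => ~ c A) m B].

Definition ramsey_asym_bound m a b N := forall X : {fset nat}, N <= #|` X| ->
  forall c, exists2 B, B `<=` X &
    (a <= #|` B| /\ monochromatic c m B) \/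
    (b <= #|` B| /\ monochromatic (fun A => ~ c A) m B).

Lemma ramsey_bound0 n : ramsey_bound 0 n n.
Proof.
move=> X nX c; exists X; split=> //.
by case: (classic (c fset0)) => h; [left | right] => A _ /cardfs0_eq ->.
Qed.

Lemma monochromatic_fset1U (P : {fset nat} -> Prop) m x (B : {fset nat}) :
  x \notin B -> monochromatic P m.+1 B -> monochromatic (fun A => P (x |` A)) m B ->
  monochromatic P m.+1 (x |` B).
Proof.
move=> xB PB PxB A AxB cA; case xA: (x \in A).
  rewrite -(fsetD1K xA); apply: PxB.
    apply/fsubsetP => y; rewrite in_fsetD1 => /andP[yx /(fsubsetP AxB)].
    by rewrite in_fset1U (negbTE yx).
  by move: cA; rewrite (cardfsD1 x A) xA add1n => -[].
apply: PB cA; apply/fsubsetP => y yA.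
move/fsubsetP: AxB => /(_ y yA); rewrite in_fset1U => /orP[/eqP yx | //].
by move: xA; rewrite -yx yA.
Qed.

Lemma ramsey_asym_step m a b N0 N1 N2 : ramsey_bound m (maxn N1 N2) N0 ->
  ramsey_asym_bound m.+1 a b.+1 N1 -> ramsey_asym_bound m.+1 a.+1 b N2 ->
  ramsey_asym_bound m.+1 a.+1 b.+1 N0.+1.
Proof.
move=> R0 R1 R2 X NX c.
have [x xX] : exists x, x \in X by apply/fset0Pn; rewrite -cardfs_gt0 (leq_trans _ NX).
have NY : N0 <= #|` X `\ x| by move: NX; rewrite (cardfsD1 x X) xX add1n.
have [Z [ZY nZ hZ]] := R0 _ NY (fun A => c (x |` A)).
have xZ : x \notin Z by apply: (contra (fsubsetP ZY x)); rewrite in_fsetD1 eqxx.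
have ZX : Z `<=` X by apply: fsubset_trans ZY (fsubD1set X x).
have grow B : B `<=` Z -> x |` B `<=` X /\ x \notin B /\ #|` x |` B| = #|` B|.+1.
  move=> BZ; have xB : x \notin B by apply: (contra (fsubsetP BZ x)).
  by rewrite fsubUset fsub1set xX (fsubset_trans BZ ZX) cardfsU1 xB add1n.
case: hZ => hZ.
- have [B BZ [[aB cB] | [bB cB]]] := R1 Z (leq_trans (leq_maxl _ _) nZ) c.
    have [xBX [xB cxB]] := grow B BZ; exists (x |` B) => //.
    left; split; first by rewrite cxB.
    by apply: monochromatic_fset1U => // A AB; apply: hZ; exact: fsubset_trans AB BZ.
  by exists B; [exact: fsubset_trans BZ ZX | right].
- have [B BZ [[aB cB] | [bB cB]]] := R2 Z (leq_trans (leq_maxr _ _) nZ) c.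
    by exists B; [exact: fsubset_trans BZ ZX | left].
  have [xBX [xB cxB]] := grow B BZ; exists (x |` B) => //.
  right; split; first by rewrite cxB.
  by apply: monochromatic_fset1U => // A AB; apply: hZ; exact: fsubset_trans AB BZ.
Qed.

Lemma ramsey_asym m : (forall n, exists N, ramsey_bound m n N) ->
  forall a b, exists N, ramsey_asym_bound m.+1 a b N.
Proof.
move=> Rm; elim=> [|a IHa] b.
  exists 0 => X _ c; exists fset0; rewrite ?fsub0set //.
  by left; split=> // A; rewrite fsubset0 => /eqP ->; rewrite cardfs0.
elim: b => [|b IHb].
  exists 0 => X _ c; exists fset0; rewrite ?fsub0set //.
  by right; split=> // A; rewrite fsubset0 => /eqP ->; rewrite cardfs0.
have [N1 R1] := IHa b.+1; have [N2 R2] := IHb; have [N0 R0] := Rm (maxn N1 N2).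
by exists N0.+1; apply: ramsey_asym_step R0 R1 R2.
Qed.

Theorem finite_ramsey m n : exists N, ramsey_bound m n N.
Proof.
elim: m n => [|m IHm] n; first by exists n; apply: ramsey_bound0.
have [N RN] := ramsey_asym IHm n n; exists N => X NX c.
have [B BX [[nB cB] | [nB cB]]] := RN X NX c; exists B; split=> //; by [left | right].
Qed.

Lemma validH_subtuple m n (x : seq nat) (e : 'I_m -> 'I_n) :
  validH n x -> injective e -> validH m (subtuple x e).
Proof.
move=> /andP[/eqP sx ux] ie; rewrite /validH size_map size_enum_ord eqxx /=.
rewrite map_inj_uniq ?enum_uniq // => i j /eqP.
by rewrite nth_uniq ?sx // => /eqP /ord_inj /ie.
Qed.

Lemma map_enum_ord (f : nat -> nat) m :
  [seq f (nat_of_ord i) | i <- enum 'I_m] = [seq f i | i <- iota 0 m].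
Proof. by rewrite -val_enum_ord -map_comp. Qed.

Lemma subtuple_id m (s : seq nat) : size s = m -> subtuple s (@id 'I_m) = s.
Proof. by move=> sm; rewrite /subtuple (map_enum_ord (nth 0 s)) -{2}(mkseq_nth 0 s) sm. Qed.

Lemma nth_subtuple m n (x : seq nat) (e : 'I_m -> 'I_n) (i : 'I_m) :
  nth 0 (subtuple x e) i = nth 0 x (e i).
Proof. by rewrite (nth_map i) ?size_enum_ord // nth_ord_enum. Qed.

Lemma subtuple_onto n m (s : H n) (a : seq nat) : uniq a -> size a = m ->
  {subset a <= val s} -> exists2 e : 'I_m -> 'I_n, injective e & subtuple (val s) e = a.
Proof.
move=> ua sa als.
have idx_lt i : i < m -> index (nth 0 a i) (val s) < n.
  move=> im; suff : index (nth 0 a i) (val s) < size (val s) by rewrite sizeH.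
  by rewrite index_mem; apply/als/mem_nth; rewrite sa.
pose e (i : 'I_m) : 'I_n := Ordinal (idx_lt i (ltn_ord i)).
have eE (i : 'I_m) : nth 0 (val s) (e i) = nth 0 a i.
  by rewrite nth_index // -index_mem sizeH; apply: (idx_lt _ (ltn_ord i)).
exists e.
  move=> i j /(congr1 (nth 0 (val s) \o val)) /=; rewrite !eE => /eqP.
  by rewrite nth_uniq ?sa // => /eqP /ord_inj.
by rewrite /subtuple (eq_map eE) (map_enum_ord (nth 0 a)) -{2}(mkseq_nth 0 a) sa.
Qed.

Lemma thickHS m (S S' : pset (H m)) : (forall x, S x -> S' x) -> thickH S -> thickH S'.
Proof.
by move=> SS' tS n mn; have [s hs] := tS n mn; exists s => e /hs; apply: inHS.
Qed.

Definition fset_of (s : seq nat) : {fset nat} := [fset y in s].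

Lemma in_fset_of s y : (y \in fset_of s) = (y \in s). Proof. by rewrite inE. Qed.

Lemma card_fset_of s : uniq s -> #|` fset_of s| = size s.
Proof. by move=> us; rewrite card_fseq undup_id. Qed.

Lemma fset_of_enum (A : {fset nat}) : fset_of (enum_fset A) = A.
Proof. by apply/fsetP => y; rewrite in_fset_of. Qed.

Lemma size_enum_OmSub n (A : OmSub n) : size (enum_fset (val A)) = n.
Proof. by case: A => B /= /eqP. Qed.

Lemma card_phi_set m (x : H m) : #|` phi_set x| == m.
Proof. by rewrite [phi_set x]/(fset_of _) card_fset_of ?uniqH ?sizeH. Qed.

Definition phi m (x : H m) : OmSub m :=
  @exist _ (fun A : {fset nat} => #|` A| == m) (phi_set x) (card_phi_set x).

Lemma phi_preE m (T : pset (OmSub m)) x : phi_pre T x <-> T (phi x).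
Proof.
split=> [[A [TA eA]] | Tx]; last by exists (phi x).
by have <- : A = phi x by apply: val_inj.
Qed.

Lemma thickS_phi_pre m (T : pset (OmSub m)) : thickS T -> thickH (phi_pre T).
Proof.
move=> tT n mn; have [s sT] := tT n mn.
have vs : validH n (enum_fset (val s)) by rewrite /validH fset_uniq size_enum_OmSub eqxx.
exists (mkH vs) => e ie; exists (mkH (validH_subtuple vs ie)); split=> //.
apply/phi_preE/sT; apply/fsubsetP => y /=; rewrite in_fset_of => /mapP[i _ ->].
by rewrite -[X in _ \in X]fset_of_enum in_fset_of mem_nth ?size_enum_OmSub.
Qed.

Lemma thickH_phi_pre m (T : pset (OmSub m)) : thickH (phi_pre T) -> thickS T.
Proof.
move=> tT n mn; have [s sT] := tT n mn.
exists (phi s) => A /= As; set a := enum_fset (val A).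
have [|e ie ea] := @subtuple_onto n m s a (fset_uniq _) (size_enum_OmSub A).
  by move=> y ya; move/fsubsetP: As => /(_ y ya); rewrite in_fset_of.
have [y [/phi_preE Ty ey]] := sT e ie; rewrite -[RHS]/(subtuple _ e) ea in ey.
suff -> : A = phi y by [].
by apply: val_inj; rewrite /= /phi_set ey; exact: (esym (fset_of_enum _)).
Qed.

(** * Part (a): minimal subflows give thick ultrafilters *)

Lemma thickH_FY (M : pset SGfam) m T : subflow M -> FY M m T -> thickH T.
Proof.
move=> [MS [a Ma] _ actM] FT n mn; have aS := MS a Ma; have [aU _] := aS.
pose good (e : {ffun 'I_m -> 'I_n}) (x : H n) :=
  injective e -> inH T (subtuple (val x) e).
have agood e : e \in enum {ffun 'I_m -> 'I_n} -> a n (good e).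
  move=> _; case: (classic (injective e)) => ie; last by apply: ultra_all => // x /ie.
  have [g [bg ge]] := ord_injection_extension ie.
  have gn : bnd g m <= n by apply: bnd_le => i im; rewrite (ge (Ordinal im)).
  move: (FT _ (actM g bg a Ma)); rewrite (actE _ aS gn) => h.
  by apply: (ultraS (aU n) h) => x; rewrite (precomp_ord _ ge) => Tx _.
have [s sgood] := ultra_inhabited (aU n) (ultra_big_and (aU n) agood).
exists s => e ie; have ie' : injective (finfun e) by move=> i j; rewrite !ffunE => /ie.
have := sgood (finfun e); rewrite mem_enum => /(_ isT ie').
by congr inH; apply: eq_map => i; rewrite ffunE.
Qed.

Definition all_subtuples m (P : pset (H m)) n : pset (H n) :=
  fun y => forall e : 'I_m -> 'I_n, injective e -> inH P (subtuple (val y) e).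
Arguments all_subtuples {m} P n _.

Lemma all_subtuples_take m (P : pset (H m)) (b : SGfam) k n : isSG b -> k <= n ->
  b n (all_subtuples P n) -> b k (all_subtuples P k).
Proof.
move=> [bU bC] kn h; rewrite (bC _ _ kn); apply: (ultraS (bU n) h) => x Px.
exists (mkH (validH_take kn (validHP x))); split=> // e ie.
have iwe : injective (widen_ord kn \o e) by move=> i j /= [/ord_inj /ie].
by have := Px _ iwe; congr inH; apply: eq_map => i /=; rewrite nth_take.
Qed.

Lemma act_all_subtuples m (P : pset (H m)) (a : SGfam) : isSG a ->
  (forall n, a n (all_subtuples P n)) -> forall g, Sinfty g -> act a g P.
Proof.
move=> aS aP g bg; have [aU _] := aS; rewrite (actE _ aS (leqnn (bnd g m))).
pose e (i : 'I_m) : 'I_(bnd g m) := Ordinal (bnd_lt g (ltn_ord i)).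
have ie : injective e by move=> i j [/(bij_inj bg) /ord_inj].
by apply: (ultraS (aU _) (aP _)) => x /(_ e ie); rewrite (@precomp_ord _ _ e g).
Qed.

Lemma FY_all_subtuples (M : pset SGfam) m (P : pset (H m)) : minimal_subflow M ->
  (forall n, exists2 b, M b & b n (all_subtuples P n)) -> FY M m P.
Proof.
move=> mM bP; have [[MS _ cM _] _] := mM.
have [b bMP] : {b : nat -> SGfam & forall n, M (b n) /\ b n n (all_subtuples P n)}.
  by apply: (@boolp.choice _ _ (fun n b => M b /\ b n (all_subtuples P n))) => n;
    have [b ? ?] := bP n; exists b.
have bS n : isSG (b n) by apply: MS; case: (bMP n).
pose tail n0 k := n0 <= k.
have [|t1 t2 [n1 ->] [n2 ->]|_ [n0 ->]|W [UW Wtail]] :=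
  @directed_base_ultra _ (fun S => exists n0, S = tail n0).
- by exists (tail 0), 0.
- exists (tail (maxn n1 n2)); first by exists (maxn n1 n2).
  by move=> k; rewrite /tail geq_max => /andP.
- by exists n0; rewrite /tail.
have Mlim : M (ultra_lim W b).
  by apply: (closedSG_ultra_lim cM UW bS); apply: (ultra_all UW) => n; case: (bMP n).
have limP n : ultra_lim W b (all_subtuples P n).
  apply: (ultraS UW (Wtail _ (ex_intro _ n erefl))) => k nk.
  by apply: all_subtuples_take nk _; case: (bMP k).
move=> a Ma; apply: (minimal_subflow_invariant (Phi := fun S => S = P) mM) => //.
exists (ultra_lim W b); split=> // g bg _ ->.
exact: act_all_subtuples (isSG_ultra_lim UW bS) limP g bg.
Qed.

Lemma enum_fset_positions N n (B : {fset nat}) : B `<=` fset_of (iota 0 N) ->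
  n <= #|` B| -> exists2 e : 'I_n -> 'I_N, injective e &
    forall i : 'I_n, nat_of_ord (e i) = nth 0 (enum_fset B) i.
Proof.
move=> BN nB; set b := enum_fset B.
have inb i : i < n -> nth 0 b i \in B.
  by move=> iN; rewrite -[_ \in B]/(_ \in b) mem_nth // (leq_trans iN nB).
have ltN (i : 'I_n) : nth 0 b i < N.
  by move/fsubsetP: BN => /(_ _ (inb i (ltn_ord i))); rewrite in_fset_of mem_iota.
exists (fun i => Ordinal (ltN i)) => // i j [] /eqP.
by rewrite nth_uniq ?fset_uniq ?(leq_trans (ltn_ord _) nB) // => /eqP /ord_inj.
Qed.

Lemma fset_of_map_enum (f : nat -> nat) (l : seq nat) :
  fset_of [seq f j | j <- enum_fset (fset_of l)] = fset_of [seq f j | j <- l].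
Proof.
apply/fsetP => v; rewrite !in_fset_of.
by apply/mapP/mapP => -[j jl ->]; exists j; rewrite ?in_fset_of in jl *.
Qed.

Lemma ramsey_subtuple m (T : pset (OmSub m)) n N : ramsey_bound m n N ->
  forall y : H N, exists2 e' : 'I_n -> 'I_N, injective e' &
    inH (fun z => all_subtuples (phi_pre T) n z \/
                  all_subtuples (phi_pre (fun A => ~ T A)) n z) (subtuple (val y) e').
Proof.
move=> RN y.
pose img A := fset_of [seq nth 0 (val y) j | j <- enum_fset A].
pose c A := exists2 Z : OmSub m, T Z & val Z = img A.
have NX : N <= #|` fset_of (iota 0 N)| by rewrite card_fset_of ?iota_uniq ?size_iota.
have [B [BN nB hom]] := RN _ NX c.
have [e' ie' e'E] := enum_fset_positions BN nB.
exists e' => //; have vz := validH_subtuple (validHP y) ie'.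
exists (mkH vz); split=> //=; set z := subtuple (val y) e'.
have pos (e : 'I_m -> 'I_n) (ie : injective e) : exists2 A, A `<=` B /\ #|` A| = m &
    phi_set (mkH (validH_subtuple vz ie)) = img A.
  pose l := [seq nth 0 (enum_fset B) (e i) | i <- enum 'I_m].
  have ul : uniq l.
    rewrite map_inj_uniq ?enum_uniq // => i j /eqP.
    by rewrite nth_uniq ?fset_uniq ?(leq_trans (ltn_ord _) nB) // => /eqP /ord_inj /ie.
  exists (fset_of l).
    split; last by rewrite card_fset_of // size_map size_enum_ord.
    apply/fsubsetP => v; rewrite in_fset_of => /mapP[i _ ->].
    by rewrite -[_ \in B]/(_ \in enum_fset B) mem_nth // (leq_trans (ltn_ord _) nB).
  rewrite /img fset_of_map_enum -map_comp /phi_set /=; congr fset_of.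
  by apply: eq_map => i /=; rewrite /z nth_subtuple e'E.
case: hom => hom; [left | right] => e ie; exists (mkH (validH_subtuple vz ie));
  split=> //; apply/phi_preE; have [A [AB cA] eA] := pos e ie.
  have [Z TZ eZ] := hom _ AB cA.
  by rewrite (_ : phi _ = Z) //; apply: val_inj; rewrite /= eA eZ.
by move=> TA; apply: (hom _ AB cA); exists (phi (mkH (validH_subtuple vz ie))).
Qed.

Lemma all_subtuples_dichotomy (M : pset SGfam) m (T : pset (OmSub m)) n : subflow M ->
  (exists2 b, M b & b n (all_subtuples (phi_pre T) n)) \/
  (exists2 b, M b & b n (all_subtuples (phi_pre (fun A => ~ T A)) n)).
Proof.
move=> [MS [a Ma] _ actM]; have [N RN] := finite_ramsey m n.
have aS := MS a Ma; have [aU _] := aS.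
pose Z (z : H n) := all_subtuples (phi_pre T) n z \/
                    all_subtuples (phi_pre (fun A => ~ T A)) n z.
pose good (e' : {ffun 'I_n -> 'I_N}) (y : H N) :=
  injective e' /\ inH Z (subtuple (val y) e').
have some_good : a N (fun y => exists e', e' \in enum {ffun 'I_n -> 'I_N} /\ good e' y).
  apply: ultra_all => // y; have [e' ie' ye'] := ramsey_subtuple T RN y.
  exists (finfun e'); rewrite mem_enum; split=> //; split.
    by move=> i j; rewrite !ffunE => /ie'.
  by congr inH: ye'; apply: eq_map => i; rewrite ffunE.
have [e' [_ ae']] := ultra_big_or (aU N) some_good.
have [y [ie' _]] := ultra_inhabited (aU N) ae'.
have [g [bg ge']] := ord_injection_extension ie'.
have gN : bnd g n <= N by apply: bnd_le => i im; rewrite (ge' (Ordinal im)).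
have agZ : act a g Z.
  rewrite (actE _ aS gN); apply: (ultraS (aU N) ae') => x [_].
  by rewrite (precomp_ord _ ge').
have Mag := actM g bg a Ma; have [agU _] := MS _ Mag.
by case: (ultra_or (agU n) agZ) => h; [left | right]; exists (act a g).
Qed.

Theorem thick_ultrafilter_FY (M : pset SGfam) m : minimal_subflow M ->
  thick_ultrafilterS (phi_img (FY M m)).
Proof.
move=> mM; have [sM _] := mM; have [MS [a0 Ma0] _ _] := sM.
have MU a n : M a -> is_ultrafilter (a n) by move=> /MS [].
split; last by move=> T /(thickH_FY sM); apply: thickH_phi_pre.
split; [split| |].
- by move=> a Ma; apply: (ultra_all (MU a m Ma)) => x; apply/phi_preE.
- move=> A B FA AB a Ma; apply: (ultraS (MU a m Ma) (FA a Ma)).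
  by move=> x /phi_preE /AB /phi_preE.
- move=> A B FA FB a Ma; have aU := MU a m Ma.
  apply: (ultraS aU (ultraI aU (FA a Ma) (FB a Ma))).
  by move=> x [/phi_preE ? /phi_preE ?]; apply/phi_preE.
- by move=> F0; have [x /phi_preE] := ultra_inhabited (MU a0 m Ma0) (F0 a0 Ma0).
move=> T.
case: (classic (forall n, exists2 b, M b & b n (all_subtuples (phi_pre T) n))) => hT.
  by left; apply: FY_all_subtuples.
right; apply: FY_all_subtuples => // n; have [n0 hn0] := not_all_ex_not _ _ hT.
have [[b Mb bT] | [b Mb bnT]] := all_subtuples_dichotomy T (maxn n n0) sM.
  by case: hn0; exists b => //; apply: all_subtuples_take (leq_maxr _ _) bT; apply: MS.
by exists b => //; apply: all_subtuples_take (leq_maxl _ _) bnT; apply: MS.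
Qed.

(** * Part (b): thick ultrafilters come from minimal subflows *)

Lemma validH_map_iota (x : nat -> nat) k : injective x -> validH k [seq x i | i <- iota 0 k].
Proof. by move=> ix; rewrite /validH size_map size_iota eqxx map_inj_uniq ?iota_uniq. Qed.

Definition point (x : nat -> nat) (ix : injective x) : SGfam :=
  fun k (S : pset (H k)) => S (mkH (validH_map_iota k ix)).

Lemma isSG_point x (ix : injective x) : isSG (point ix).
Proof.
split=> [n | m n mn S].
  split; [split| |] => //; first by move=> A B SA /(_ _ SA).
  by move=> A; apply: classic.
have take_x : take m [seq x i | i <- iota 0 n] = [seq x i | i <- iota 0 m].
  by rewrite -map_take take_iota (minn_idPl mn).
rewrite /point; split=> [Sm | [y [Sy ey]]]; first by exists (mkH (validH_map_iota m ix)).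
by rewrite (_ : mkH _ = y) //; apply: val_inj; rewrite ey /= take_x.
Qed.

Lemma precomp_map_iota (x : nat -> nat) g m N : (forall i, i < m -> g i < N) ->
  precomp g [seq x i | i <- iota 0 N] m = [seq x (g i) | i <- iota 0 m].
Proof.
move=> gN; apply/eq_in_map => i; rewrite mem_iota add0n => /andP[_ /gN giN].
by rewrite (nth_map 0) ?size_iota // nth_iota.
Qed.

Definition sees_upto m (T : pset (OmSub m)) n (b : SGfam) :=
  forall g, injective g -> bnd g m <= n ->
    b (bnd g m) (fun y => inH (phi_pre T) (precomp g (val y) m)).

Lemma thickS_point m (T : pset (OmSub m)) n : thickS T -> m <= n ->
  exists2 b, isSG b & sees_upto T n b.
Proof.
move=> tT mn; have [s sT] := tT n mn.
have [x [bx xE]] := bijective_extension (fset_uniq (val s)).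
have ix := bij_inj bx.
exists (point ix) => [|g ig gn]; first exact: isSG_point.
rewrite /point /= precomp_map_iota; last by move=> i; apply: bnd_lt.
have vw : validH m [seq x (g i) | i <- iota 0 m] := validH_map_iota m (inj_comp ix ig).
exists (mkH vw); split=> //; apply/phi_preE/sT.
apply/fsubsetP => v; rewrite /= in_fset_of => /mapP[i].
rewrite mem_iota add0n => /andP[_ im] ->.
have gin : g i < size (enum_fset (val s)).
  by rewrite size_enum_OmSub (leq_trans (bnd_lt g im)).
by rewrite xE // -[_ \in val s]/(_ \in enum_fset _) mem_nth.
Qed.

Lemma subflow_isSG : subflow isSG.
Proof.
split=> //; first by exists (point (@inj_id nat)); apply: isSG_point.
by move=> g bg a aS; apply: isSG_act aS (bij_inj bg).
Qed.

Section ThickUltrafilter.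
Variables (m : nat) (p : pset (pset (OmSub m))).
Hypothesis tp : thick_ultrafilterS p.

Let Phi := fun S : pset (H m) => exists T, p T /\ S = phi_pre T.

Lemma gen_filter_phi_preE S :
  gen_filter Phi S <-> exists2 T, p T & forall x, phi_pre T x -> S x.
Proof.
have [[[pT _ pI] _ _] _] := tp.
split=> [genS | [T pT' TS] F [_ FS _] FB]; last by apply: FS (FB _ _) TS; exists T.
apply: (genS (fun S => exists2 T, p T & forall x, phi_pre T x -> S x)).
  split; first by exists (fun _ => True).
  - by move=> A A' [T pT' TA] AA'; exists T => // x /TA /AA'.
  - move=> A A' [T pT1 TA] [T' pT2 TA']; exists (fun Z => T Z /\ T' Z); first exact: pI.
    by move=> x /phi_preE [/phi_preE/TA ? /phi_preE/TA' ?].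
by move=> _ [T [pT' ->]]; exists T.
Qed.

Lemma maximal_thick_gen_filter : maximal_thick_filterH (gen_filter Phi).
Proof.
have [[[pT _ pI] _ pC] pthick] := tp.
split.
  split; last first.
    by move=> S /gen_filter_phi_preE [T /pthick/thickS_phi_pre tT TS]; apply: thickHS TS tT.
  split.
  - by apply/gen_filter_phi_preE; exists (fun _ => True).
  - move=> A A' /gen_filter_phi_preE [T pT' TA] AA'.
    by apply/gen_filter_phi_preE; exists T => // x /TA /AA'.
  - move=> A A' /gen_filter_phi_preE [T pT1 TA] /gen_filter_phi_preE [T' pT2 TA'].
    apply/gen_filter_phi_preE; exists (fun Z => T Z /\ T' Z); first exact: pI.
    by move=> x /phi_preE [/phi_preE/TA ? /phi_preE/TA' ?].
move=> F [[_ _ FI] Fthick] genF S FS; apply/gen_filter_phi_preE.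
pose T0 (A : OmSub m) := forall x : H m, val A = phi_set x -> S x.
exists T0 => [|x [A [T0A eA]]]; last exact: T0A.
case: (pC T0) => // pnT0; exfalso.
have FnT0 : F (phi_pre (fun A => ~ T0 A)).
  by apply/genF/gen_filter_phi_preE; exists (fun A => ~ T0 A).
have [s sST] := Fthick _ (FI _ _ FS FnT0) m (leqnn m).
(* [s] itself, and every reordering of it, lies in [S]; so [phi s] satisfies [T0]. *)
have [y [[_ /phi_preE nT0y] ey]] := sST id (@inj_id _).
rewrite -[RHS]/(subtuple _ id) subtuple_id ?sizeH // in ey.
move/val_inj: ey nT0y => ->; apply=> x ex.
have [|e ie esx] := @subtuple_onto m m s (val x) (uniqH x) (sizeH x).
  by move=> v vx; rewrite -in_fset_of -[fset_of (val s)]/(val (phi s)) ex in_fset_of.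
have [z [[Sz _] ez]] := sST e ie.
by rewrite -[RHS]/(subtuple _ e) esx in ez; move/val_inj: ez => <-.
Qed.

Lemma invariant_part_phi_pre_inhabited : exists a, invariant_part isSG Phi a.
Proof.
have [[[pT _ pI] _ _] pthick] := tp.
pose I := (pset (OmSub m) * nat)%type.
have [b bP] : {b : I -> SGfam &
    forall i, isSG (b i) /\ (p i.1 -> m <= i.2 -> sees_upto i.1 i.2 (b i))}.
  apply: (@boolp.choice _ _ (fun i b => isSG b /\ (p i.1 -> m <= i.2 -> sees_upto i.1 i.2 b))).
  move=> -[T n] /=; case: (classic (p T /\ m <= n)) => [[pT' mn] | nh].
    by have [b bS bT] := thickS_point (pthick _ pT') mn; exists b.
  by exists (point (@inj_id nat)); split=> [|pT' mn]; [apply: isSG_point | case: nh].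
(* Index points by pairs (T, n), directed by shrinking T in [p] and growing n. *)
pose below T0 n0 (i : I) := [/\ p i.1, forall A, i.1 A -> T0 A & n0 <= i.2].
have [||| W [UW Wbelow]] :=
  @directed_base_ultra _ (fun S => exists T0 n0, p T0 /\ S = below T0 n0).
- by exists (below (fun _ => True) 0), (fun _ => True), 0.
- move=> _ _ [T1 [n1 [pT1 ->]]] [T2 [n2 [pT2 ->]]].
  exists (below (fun A => T1 A /\ T2 A) (maxn n1 n2)).
    by exists (fun A => T1 A /\ T2 A), (maxn n1 n2); split=> //; apply: pI.
  move=> [T n] [pT' T12 /=]; rewrite geq_max => /andP[n1n n2n].
  by split; split=> // A /T12 [].
- by move=> _ [T0 [n0 [pT0 ->]]]; exists (T0, n0); split.
exists (ultra_lim W b); split; first by apply: isSG_ultra_lim => // i; case: (bP i).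
move=> g bg _ [T0 [pT0 ->]]; rewrite /act /ultra_lim.
have Wb : W (below T0 (maxn (bnd g m) m)) by apply: Wbelow; exists T0, (maxn (bnd g m) m).
apply: (ultraS UW Wb) => -[T n] [/= pT' TT0]; rewrite geq_max => /andP[gn mn].
have [[bU _] bT] := bP (T, n).
apply: (ultraS (bU _) (bT pT' mn g (bij_inj bg) gn)) => y.
by apply: inHS => z /phi_preE /TT0 /phi_preE.
Qed.

Lemma minimal_subflow_of_thick_ultrafilter :
  exists M, minimal_subflow M /\ (forall T, p T <-> phi_img (FY M m) T).
Proof.
have sY := subflow_invariant_part subflow_isSG invariant_part_phi_pre_inhabited.
have [M [mM MY]] := subflow_has_minimal sY.
have pFY T : p T -> phi_img (FY M m) T.
  by move=> pT a /MY aY; apply: (invariant_partP (proj1 aY) aY); exists T.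
exists M; split=> // T; split; first exact: pFY.
have [[FYfilter FY0 _] _] := thick_ultrafilter_FY m mM.
exact: (ultra_max (proj1 tp) FYfilter FY0 pFY).
Qed.

End ThickUltrafilter.

Theorem mainTheorem9 (m : nat) :
  (forall M : pset SGfam, minimal_subflow M ->
     thick_ultrafilterS (phi_img (FY M m))) /\
  (forall p : pset (pset (OmSub m)), thick_ultrafilterS p ->
     maximal_thick_filterH
       (gen_filter (fun S : pset (H m) => exists T, p T /\ S = phi_pre T)) /\
     (exists M : pset SGfam, minimal_subflow M /\
        (forall T, p T <-> phi_img (FY M m) T))).
Proof.
split=> [M | p tp]; first exact: thick_ultrafilter_FY.
split; [exact: maximal_thick_gen_filter | exact: minimal_subflow_of_thick_ultrafilter].
Qed.
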